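(* Let $P,Q$ be lattice paths from $(0,0)$ to $(m,r)$ with $P$ never going above $Q$ and $[P,Q]$ a connected skew shape. Then the number of edges of the lattice path matroid polytope $\mathcal{P}(M[P,Q])$ equals $\sum_L \mathrm{area}(L',L)$, where the sum runs over all lattice paths $L$ from $(0,0)$ to $(m,r)$ inside the region $[P,Q]$, and $\mathrm{area}(L',L)$ is the number of unit boxes in the region between $L'=L'(P,L)$ and $L$.
   Context: Lattice paths use steps $E=(1,0)$, $N=(0,1)$. $M[P,Q]$ is the matroid on $[m+r]$ whose bases are the $r$-subsets $B$ such that the lattice path with North steps exactly at positions in $B$ stays in the region between $P$ and $Q$; $\mathcal{P}(M[P,Q])=\mathrm{conv}\{\sum_{b\in B}e_b: B\text{ a basis}\}\subseteq\mathbb{R}^{m+r}$. $[P,Q]$ connected means $P$ and $Q$ meet only at $(0,0)$ and $(m,r)$. For a lattice path $L$ inside $[P,Q]$ from $(0,0)$ to $(m,r)$, $L'=L'(P,L)$ is the lattice path that passes through all intersection points of $P$ and $L$ and, for each maximal connected region between $P$ and $L$ with starting point $(x,y)$ and ending point $(x+a,y+b)$, consists of the steps $E^aN^b$ from $(x,y)$ to $(x+a,y+b)$. *)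

From HB Require Import structures.
From mathcomp Require Import all_boot all_order all_algebra.
From mathcomp Require Import reals.
Set Implicit Arguments. Unset Strict Implicit. Unset Printing Implicit Defensive.
Import Order.TTheory GRing.Theory Num.Theory.

(* A lattice path from (0,0) to (m,r) with n = m + r steps is encoded by the
   set B : {set 'I_n} of positions of its North steps (so #|B| = r);
   step i (0-based) is N iff i \in B, E otherwise. *)

Section Paths.
Variable n : nat.

Definition ht (B : {set 'I_n}) (k : nat) : nat :=
  #|[set i : 'I_n | (i \in B) && (i < k)]|.

Definition in_region (P Q L : {set 'I_n}) : bool :=
  [forall k : 'I_n.+1, (ht P k <= ht L k) && (ht L k <= ht Q k)].

Definition isect (P L : {set 'I_n}) (k : nat) : bool := ht P k == ht L k.

Definition seg_start (P L : {set 'I_n}) (i : 'I_n) : nat :=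
  \max_(k < i.+1 | isect P L k) k.
Definition seg_end (P L : {set 'I_n}) (i : 'I_n) : nat :=
  i.+1 + find (isect P L) (iota i.+1 (n - i)).

(* L' = L'(P,L): on each segment between consecutive meeting points of P and L,
   from (x,y) to (x+a,y+b), it consists of E^a N^b. *)
Definition Lprime (P L : {set 'I_n}) : {set 'I_n} :=
  [set i : 'I_n |
     let k1 := seg_start P L i in
     let k2 := seg_end P L i in
     let a := (k2 - k1) - (ht L k2 - ht L k1) in
     k1 + a <= i].

(* height of the E step of path B in column x (i.e. the x-th E step, 0-based) *)
Definition colh (B : {set 'I_n}) (x : nat) : nat :=
  #|[set i : 'I_n | (i \in B) &&
        (#|[set j : 'I_n | (j < i) && (j \notin B)]| <= x)]|.

Definition area (m : nat) (A B : {set 'I_n}) : nat :=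
  \sum_(x < m) ((colh A x - colh B x) + (colh B x - colh A x)).

Definition lpm_bases (r : nat) (P Q : {set 'I_n}) : {set {set 'I_n}} :=
  [set B : {set 'I_n} | (#|B| == r) && in_region P Q B].

Variable R : realType.
Local Open Scope ring_scope.

Definition ptvec (B : {set 'I_n}) : 'rV[R]_n := \row_(i < n) ((i \in B)%:R).

Definition dotv (c v : 'rV[R]_n) : R := \sum_(i < n) c 0 i * v 0 i.

(* vertex set of the face of conv(V) maximizing the linear functional c,
   for V the set of indicator vectors of the sets in Bs *)
Definition face_of (Bs : {set {set 'I_n}}) (c : 'rV[R]_n) : {set {set 'I_n}} :=
  [set B in Bs | [forall B' in Bs, dotv c (ptvec B') <= dotv c (ptvec B)]].

Definition diffmx (S : {set {set 'I_n}}) (B0 : {set 'I_n}) : 'M[R]_(#|S|, n) :=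
  \matrix_(j < #|S|, i < n) (ptvec (enum_val j) 0 i - ptvec B0 0 i).

(* S is the vertex set of an edge (1-dimensional face) of conv{ptvec B | B in Bs} *)
Definition is_edge (Bs S : {set {set 'I_n}}) : Prop :=
  (exists c : 'rV[R]_n, S = face_of Bs c) /\
  (exists2 B0, B0 \in S & \rank (diffmx S B0) = 1%N).

End Paths.

From Pilot Require Import Defs.
From HB Require Import structures.
From mathcomp Require Import all_boot all_order all_algebra.
From mathcomp Require Import reals.
From mathcomp Require Import zify lra.
Set Implicit Arguments. Unset Strict Implicit. Unset Printing Implicit Defensive.
Import GRing.Theory Num.Theory.

(* The edges of a matroid base polytope are the pairs of bases {B, B - i + j}:
   the weight 1_B + 1_X exposes such a pair, and by symmetric exchange every
   face with two vertices B0, B1 also contains some B0 - i + j, so a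
   one-dimensional face is such a pair.  Orient each edge from the lattice
   path L whose North step i moves to a later East step j.  The swapped path
   is lower than L, so it is a basis exactly when it stays above P, that is,
   when j comes before the next point where L meets P.  Hence the edges leaving
   L are the pairs (North step, later East step) of L inside one segment
   between consecutive meeting points of P and L.
   On the other hand the area under a path counts all its (North, later East)
   pairs, so area(L', L) = inv(L) - inv(L').  The path L' has no such pair
   inside a segment, and across segments it has exactly those of L, since both
   paths have the same numbers of North and East steps in every segment. *)

Lemma sumb_card (T : finType) (p : pred T) : \sum_(x : T) p x = #|[set x | p x]|.
Proof. by rewrite -sum1dep_card [RHS]big_mkcond; apply: eq_bigr => x _; case: (p x). Qed.

Lemma sum_ord_ltn n k : \sum_(i < n) (i < k) = minn k n.
Proof.
elim: n => [|n IHn]; first by rewrite big_ord0 minn0.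
by rewrite big_ord_recr /= IHn; case: (ltnP n k) => /=; lia.
Qed.

Lemma card_setI_lt (T : finType) (Y Z : {set T}) :
  #|Y| = #|Z| -> Y != Z -> #|Y :&: Z| < #|Y|.
Proof.
move=> card_YZ; apply: contraNT; rewrite -leqNgt => le_Y.
have sub_YZ : Y \subset Z by apply/setIidPl/eqP; rewrite eqEcard subsetIl le_Y.
by rewrite eqEcard sub_YZ card_YZ leqnn.
Qed.

Lemma sum_mem_card (T : finType) (Y Z : {set T}) : \sum_(k in Y) (k \in Z) = #|Y :&: Z|.
Proof.
rewrite big_mkcond /= (eq_bigr (fun k => ((k \in Y) && (k \in Z)) : nat)) => [|k _].
  by rewrite sumb_card; apply: eq_card => k; rewrite !inE.
by case: (k \in Y).
Qed.

Section Heights.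
Variable n : nat.
Implicit Types (B : {set 'I_n}) (k lo hi : nat).

Definition north B lo hi := #|[set i : 'I_n | (i \in B) && (lo <= i < hi)]|.
Definition east B lo hi := #|[set i : 'I_n | (i \notin B) && (lo <= i < hi)]|.

Lemma ht_north B lo hi : lo <= hi -> ht B hi = ht B lo + north B lo hi.
Proof.
move=> le_lo_hi; rewrite /ht /north -!sumb_card -big_split.
by apply: eq_bigr => i _; case: (i \in B) => /=; lia.
Qed.

Lemma northE B lo hi : lo <= hi -> north B lo hi = ht B hi - ht B lo.
Proof. by move/(ht_north B)->; rewrite addKn. Qed.

Lemma ht_setT k : ht [set: 'I_n] k = minn k n.
Proof. by rewrite /ht -sumb_card -sum_ord_ltn; apply: eq_bigr => i _; rewrite inE. Qed.

Lemma card_interval lo hi : hi <= n -> #|[set i : 'I_n | lo <= i < hi]| = hi - lo.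
Proof.
move=> le_hi_n; case: (leqP lo hi) => [le_lo_hi|lt_hi_lo].
  have := northE [set: 'I_n] le_lo_hi; rewrite !ht_setT (minn_idPl le_hi_n).
  rewrite (minn_idPl (leq_trans le_lo_hi le_hi_n)) => <-.
  by apply: eq_card => i; rewrite !inE.
rewrite (_ : hi - lo = 0); last lia.
by apply/eqP; rewrite cards_eq0; apply/eqP/setP => i; rewrite !inE; lia.
Qed.

Lemma north_east B lo hi : lo <= hi -> hi <= n -> north B lo hi + east B lo hi = hi - lo.
Proof.
move=> le_lo_hi le_hi_n; rewrite -(card_interval lo le_hi_n) /north /east.
rewrite -!sumb_card -big_split.
by apply: eq_bigr => i _; case: (i \in B); rewrite /= ?addn0.
Qed.

Lemma htS B (i : 'I_n) : ht B i.+1 = ht B i + (i \in B).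
Proof.
rewrite /ht -!sumb_card (bigD1 i) // [in RHS](bigD1 i) //= ltnSn ltnn andbT andbF.
rewrite add0n addnC; congr (_ + _).
by apply: eq_bigr => j ne_ji; rewrite ltnS leq_eqVlt val_eqE (negbTE ne_ji).
Qed.

Lemma ht0 B : ht B 0 = 0.
Proof. by apply/eqP; rewrite cards_eq0; apply/eqP/setP => i; rewrite !inE andbF. Qed.

Lemma ht_full B k : n <= k -> ht B k = #|B|.
Proof.
move=> le_n_k; apply: eq_card => i; rewrite inE.
by rewrite (leq_trans (ltn_ord i) le_n_k) andbT.
Qed.

Lemma leq_ht B k k' : k <= k' -> ht B k <= ht B k'.
Proof. by move/(ht_north B)->; rewrite leq_addr. Qed.

Lemma north_le B lo hi : lo <= hi -> hi <= n -> north B lo hi <= hi - lo.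
Proof. by move=> le_lo_hi le_hi_n; rewrite -(north_east B le_lo_hi le_hi_n) leq_addr. Qed.

Lemma ht_le B k : k <= n -> ht B k <= k.
Proof.
by move=> le_k_n; have := north_le B (leq0n k) le_k_n; rewrite northE // ht0 !subn0.
Qed.

Lemma eastE B lo hi : lo <= hi -> hi <= n ->
  east B lo hi = (hi - lo) - (ht B hi - ht B lo).
Proof.
by move=> le_lo_hi le_hi_n; rewrite -(north_east B le_lo_hi le_hi_n) northE // addKn.
Qed.

End Heights.

Section Columns.
Variable n : nat.
Implicit Types (A B : {set 'I_n}) (k x : nat).

Definition inversions B := \sum_(i in B) #|[set j : 'I_n | (j \notin B) && (i < j)]|.

Lemma east_before B k : k <= n -> #|[set j : 'I_n | (j < k) && (j \notin B)]| = k - ht B k.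
Proof.
move=> le_kn; have := north_east B (leq0n k) le_kn; rewrite northE // ht0.
suff -> : #|[set j : 'I_n | (j < k) && (j \notin B)]| = east B 0 k by lia.
by apply: eq_card => j; rewrite !inE leq0n andbC.
Qed.

Lemma colh_ge B x k : k <= n -> k - ht B k <= x -> ht B k <= colh B x.
Proof.
move=> le_kn le_east_x; apply: subset_leq_card; apply/subsetP => i; rewrite !inE.
case/andP=> -> lt_ik /=; rewrite east_before ?(ltnW (ltn_ord i)) //.
have := north_le B (ltnW lt_ik) le_kn; rewrite northE ?(ltnW lt_ik) //.
have := leq_ht B (ltnW lt_ik); lia.
Qed.

Lemma colh_ht B x : exists K, [/\ K <= n, K - ht B K <= x & colh B x = ht B K].
Proof.
have ex_K : exists K, (K <= n) && (K - ht B K <= x) by exists 0; rewrite ht0.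
have bounded : forall K, (K <= n) && (K - ht B K <= x) -> K <= n by move=> K /andP[].
have [K /andP[le_Kn le_east_x] max_K] := ex_maxnP ex_K bounded.
exists K; split=> //; apply/eqP; rewrite eqn_leq colh_ge // andbT.
apply: subset_leq_card; apply/subsetP => i; rewrite !inE => /andP[B_i].
rewrite east_before ?(ltnW (ltn_ord i)) // => le_east_i.
by have := max_K i.+1; rewrite ltn_ord htS B_i addn1 subSS le_east_i; apply.
Qed.

Lemma colh_mono A B x : (forall k, k <= n -> ht A k <= ht B k) -> colh A x <= colh B x.
Proof.
move=> le_AB; have [K [le_Kn le_east_x ->]] := colh_ht A x.
apply: (leq_trans (le_AB K le_Kn)); apply: colh_ge => //.
by have := le_AB K le_Kn; lia.
Qed.

(* A North step at height h followed by an East step in column x is the box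
   (x, h) under the path. *)
Lemma sum_colh B m : #|B| + m = n -> \sum_(x < m) colh B x = inversions B.
Proof.
move=> card_Bm; have colhE x : colh B x = \sum_(i in B) (i - ht B i <= x).
  rewrite /colh -sumb_card [RHS]big_mkcond; apply: eq_bigr => i _.
  by rewrite east_before ?(ltnW (ltn_ord i)) //; case: (i \in B).
under eq_bigr do rewrite colhE.
rewrite exchange_big; apply: eq_bigr => i B_i; rewrite sumb_card.
have -> : #|[set x : 'I_m | i - ht B i <= x]| = m - (i - ht B i).
  by rewrite -(card_interval _ (leqnn m)); apply: eq_card => x; rewrite !inE ltn_ord andbT.
have -> : #|[set j : 'I_n | (j \notin B) && (i < j)]| = east B i.+1 n.
  by apply: eq_card => j; rewrite !inE ltn_ord andbT.
have := north_east B (ltn_ord i) (leqnn n); have := leq_ht B (ltn_ord i).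
rewrite northE // (ht_full B (leqnn n)) htS B_i addn1.
by have := ht_le B (ltnW (ltn_ord i)); lia.
Qed.

Lemma area_inversions m A B : #|B| + m = n -> #|A| = #|B| ->
  (forall k, k <= n -> ht A k <= ht B k) -> area m A B = inversions B - inversions A.
Proof.
move=> card_Bm card_AB le_AB; rewrite -(sum_colh card_Bm) -(sum_colh (m := m)) ?card_AB //.
rewrite /area -sumnB => [|x _]; last exact: colh_mono.
by apply: eq_bigr => x _; have := colh_mono x le_AB; lia.
Qed.

End Columns.

Section Meetings.
Variables (n : nat) (P L : {set 'I_n}).
Hypothesis card_PL : #|P| = #|L|.
Implicit Types B : {set 'I_n}.
Local Notation meet := (isect P L).
Local Notation Lp := (Lprime P L).

Definition last_meet x := \max_(k < x.+1 | meet k) k.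
Definition next_meet x := x.+1 + find meet (iota x.+1 (n - x)).

Lemma meet0 : meet 0.
Proof. by rewrite /isect !ht0. Qed.

Lemma meet_full k : n <= k -> meet k.
Proof. by move=> le_n_k; rewrite /isect !ht_full ?card_PL. Qed.

Lemma last_meet_le x : last_meet x <= x.
Proof. by apply/bigmax_leqP => k _; rewrite -ltnS. Qed.

Lemma last_meet_max x k : k <= x -> meet k -> k <= last_meet x.
Proof.
move=> le_k_x meet_k.
exact: (@leq_bigmax_cond _ (fun k : 'I_x.+1 => meet k) val (Ordinal (le_k_x : k < x.+1))).
Qed.

Lemma last_meet_meet x : meet (last_meet x).
Proof.
have meets_gt0 : 0 < #|[pred k : 'I_x.+1 | meet k]|.
  by apply/card_gt0P; exists ord0; rewrite inE /= meet0.
have [k meet_k] := eq_bigmax_cond val meets_gt0.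
by rewrite /last_meet /= => ->; rewrite inE in meet_k.
Qed.

Lemma has_meet_after x : x < n -> has meet (iota x.+1 (n - x)).
Proof. by move=> lt_xn; apply/hasP; exists n; rewrite ?meet_full // mem_iota; lia. Qed.

Lemma next_meet_gt x : x < next_meet x.
Proof. exact: ltn_addr (ltnSn x). Qed.

Lemma next_meet_le x : x < n -> next_meet x <= n.
Proof.
move=> lt_xn; have := has_meet_after lt_xn.
by rewrite has_find size_iota /next_meet; lia.
Qed.

Lemma next_meet_meet x : x < n -> meet (next_meet x).
Proof.
move=> lt_xn; have has_meet := has_meet_after lt_xn.
have := nth_find 0 has_meet; rewrite nth_iota //.
by move: has_meet; rewrite has_find size_iota.
Qed.

Lemma next_meet_min x k : x < k < next_meet x -> ~~ meet k.
Proof.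
case/andP=> lt_xk lt_k_next; have before : k - x.+1 < find meet (iota x.+1 (n - x)).
  by move: lt_k_next; rewrite /next_meet; lia.
have := before_find 0 before; rewrite nth_iota ?subnKC //; first exact: negbT.
by have := find_size meet (iota x.+1 (n - x)); rewrite size_iota; lia.
Qed.

Definition consecutive p q :=
  [/\ p < q <= n, meet p, meet q & forall k, p < k < q -> ~~ meet k].

Lemma consecutive_step (i : 'I_n) : consecutive (last_meet i) (next_meet i).
Proof.
have le_last := last_meet_le i; have lt_next := next_meet_gt i.
split; [by rewrite next_meet_le // andbT; lia | exact: last_meet_meet |
        exact: next_meet_meet | move=> k /andP[lt_last_k lt_k_next]].
case: (leqP k i) => [le_ki|lt_ik].
  by apply/negP => /(last_meet_max le_ki); lia.
by apply: (@next_meet_min i); rewrite lt_ik.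
Qed.

Lemma consecutive_last_meet q : 0 < q -> q <= n -> meet q -> consecutive (last_meet q.-1) q.
Proof.
move=> q_gt0 le_qn meet_q; have := last_meet_le q.-1.
split; [by rewrite le_qn andbT; lia | exact: last_meet_meet | by [] |
        move=> k /andP[lt_last_k lt_kq]].
by apply/negP => /(last_meet_max (_ : k <= q.-1)); lia.
Qed.

Lemma consecutive_segment p q x :
  consecutive p q -> p <= x < q -> last_meet x = p /\ next_meet x = q.
Proof.
case=> /andP[lt_pq le_qn] meet_p meet_q no_meet /andP[le_px lt_xq].
have lt_xn : x < n := leq_trans lt_xq le_qn.
split; apply/eqP; rewrite eqn_leq.
  rewrite last_meet_max // andbT leqNgt; apply/negP => lt_p_last.
  have lt_last_q := leq_ltn_trans (last_meet_le x) lt_xq.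
  by move: (no_meet (last_meet x)); rewrite last_meet_meet lt_p_last lt_last_q => /(_ isT).
apply/andP; split; rewrite leqNgt; apply/negP; [move=> lt_q_next | move=> lt_next_q].
  by move: (@next_meet_min x q); rewrite meet_q lt_xq lt_q_next => /(_ isT).
have lt_p_next := leq_ltn_trans le_px (next_meet_gt x).
by move: (no_meet (next_meet x)); rewrite next_meet_meet // lt_p_next lt_next_q => /(_ isT).
Qed.

(* The exponent [a] of the segment [E^a N^b] of [Lprime] from [p] to [q]. *)
Definition seg_east p q := (q - p) - (ht L q - ht L p).

Lemma mem_Lprime p q (i : 'I_n) :
  consecutive p q -> p <= i < q -> (i \in Lp) = (p + seg_east p q <= i).
Proof.
move=> pq /(consecutive_segment pq) [last_i next_i].
rewrite inE -[seg_start P L i]/(last_meet i) -[seg_end P L i]/(next_meet i).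
by rewrite last_i next_i.
Qed.

Lemma north_Lprime p q k :
  consecutive p q -> p <= k <= q -> north Lp p k = k - (p + seg_east p q).
Proof.
move=> pq /andP[le_pk le_kq]; have [/andP[_ le_qn] _ _ _] := pq.
rewrite -(card_interval (p + seg_east p q) (leq_trans le_kq le_qn)).
apply: eq_card => i; rewrite [LHS]inE [RHS]inE.
case: (boolP (p <= i < k)) => [/andP[le_pi lt_ik]|out_i].
  by rewrite (mem_Lprime pq) ?le_pi ?lt_ik //=; apply: leq_trans le_kq.
by rewrite andbF; move: out_i; lia.
Qed.

Lemma ht_Lprime_meet k : k <= n -> meet k -> ht Lp k = ht L k.
Proof.
elim/ltn_ind: k => k IHk le_kn meet_k.
have [->|k_gt0] := posnP k; first by rewrite !ht0.
have pq := consecutive_last_meet k_gt0 le_kn meet_k.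
have [/andP[lt_pk _] meet_p _ _] := pq.
rewrite (ht_north Lp (ltnW lt_pk)) IHk //; last lia.
rewrite (north_Lprime pq) ?leqnn ?(ltnW lt_pk) // /seg_east.
have := north_le L (ltnW lt_pk) le_kn; rewrite northE ?(ltnW lt_pk) //.
have := leq_ht L (ltnW lt_pk); lia.
Qed.

Lemma card_Lprime : #|Lp| = #|L|.
Proof. by rewrite -(ht_full Lp (leqnn n)) ht_Lprime_meet ?ht_full ?meet_full. Qed.

Lemma ht_Lprime_le k : k <= n -> ht Lp k <= ht L k.
Proof.
move=> le_kn; case: (ltnP k n) => [lt_kn|le_nk]; last first.
  by rewrite ht_Lprime_meet ?meet_full.
pose i := Ordinal lt_kn; have pq := consecutive_step i.
have [/andP[_ le_qn] meet_p _ _] := pq.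
have le_pk : last_meet i <= k := last_meet_le i.
have lt_kq : k < next_meet i := next_meet_gt i.
rewrite (ht_north Lp le_pk) (ht_north L le_pk) ht_Lprime_meet ?(leq_trans le_pk) //.
rewrite (north_Lprime pq) ?le_pk ?(ltnW lt_kq) // /seg_east.
have := north_le L (ltnW lt_kq) le_qn.
rewrite !northE ?(ltnW lt_kq) ?(leq_trans le_pk (ltnW lt_kq)) //.
have := leq_ht L le_pk; have := leq_ht L (ltnW lt_kq); lia.
Qed.

Lemma next_meet_eq q (i : 'I_n) :
  0 < q -> q <= n -> meet q -> (next_meet i == q) = (last_meet q.-1 <= i < q).
Proof.
move=> q_gt0 le_qn meet_q; have pq := consecutive_last_meet q_gt0 le_qn meet_q.
apply/eqP/idP => [next_i|/(consecutive_segment pq) []//].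
have lt_iq : i < q by rewrite -next_i next_meet_gt.
rewrite lt_iq andbT leqNgt; apply/negP => lt_i_last.
have [/andP[lt_last_q _] meet_last _ _] := pq.
move: (@next_meet_min i (last_meet q.-1)).
by rewrite meet_last lt_i_last next_i lt_last_q => /(_ isT).
Qed.

Definition seg_inversions B :=
  \sum_(i in B) #|[set j : 'I_n | (j \notin B) && (i < j < next_meet i)]|.
Definition cross_inversions B := \sum_(i in B) east B (next_meet i) n.

Lemma inversions_split B : inversions B = seg_inversions B + cross_inversions B.
Proof.
rewrite /inversions -big_split; apply: eq_bigr => i _.
rewrite /east -!sumb_card -big_split; apply: eq_bigr => j _.
by have := next_meet_gt i; have := ltn_ord j; case: (j \in B) => /=; lia.
Qed.

Lemma seg_inversions_Lprime : seg_inversions Lp = 0.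
Proof.
apply: big1 => i Lp_i; apply/eqP; rewrite cards_eq0; apply/eqP/setP => j.
rewrite inE in_set0.
apply/negbTE/negP => /andP[notLp_j /andP[lt_ij lt_j_next]].
have pq := consecutive_step i; have le_last_i := last_meet_le i.
move: Lp_i notLp_j; rewrite !(mem_Lprime pq) ?le_last_i ?next_meet_gt //; last first.
  by rewrite lt_j_next (leq_trans le_last_i (ltnW lt_ij)).
by move=> le_i; rewrite (leq_trans le_i (ltnW lt_ij)).
Qed.

Lemma sum_next_meet B (F : nat -> nat) : \sum_(i in B) F (next_meet i) =
  \sum_(q < n.+1 | meet q && (0 < q)) north B (last_meet q.-1) q * F q.
Proof.
have next_meet_ord (i : 'I_n) : next_meet i < n.+1 by rewrite ltnS next_meet_le.
rewrite (partition_big (fun i : 'I_n => Ordinal (next_meet_ord i))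
                       (fun q : 'I_n.+1 => meet q && (0 < q))) => [|i _]; last first.
  by rewrite /= next_meet_meet //; have := next_meet_gt i; lia.
apply: eq_bigr => q /andP[meet_q q_gt0]; rewrite -sum_nat_const.
apply: eq_big => [i|i /andP[_ /eqP <-] //].
by rewrite inE -val_eqE /= next_meet_eq // -ltnS.
Qed.

Lemma cross_inversions_Lprime : cross_inversions Lp = cross_inversions L.
Proof.
rewrite /cross_inversions (sum_next_meet Lp (fun q => east Lp q n)).
rewrite (sum_next_meet L (fun q => east L q n)); apply: eq_bigr => q /andP[meet_q q_gt0].
have le_qn : q <= n by rewrite -ltnS.
have [/andP[lt_pq _] meet_p _ _] := consecutive_last_meet q_gt0 le_qn meet_q.
have le_pn := leq_trans (ltnW lt_pq) le_qn.
rewrite !northE ?(ltnW lt_pq) // !eastE //.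
have meet_n := meet_full (leqnn n).
by rewrite !ht_Lprime_meet.
Qed.

Lemma area_Lprime m : #|L| + m = n -> area m Lp L = seg_inversions L.
Proof.
move=> card_Lm; rewrite area_inversions ?card_Lprime //; last exact: ht_Lprime_le.
by rewrite !inversions_split seg_inversions_Lprime cross_inversions_Lprime add0n addnK.
Qed.

End Meetings.

Section Swap.
Variable n : nat.
Implicit Types (B : {set 'I_n}) (i j : 'I_n) (k : nat).

Definition swap B i j := j |: (B :\ i).

Lemma ht_setU1 B j k : j \notin B -> ht (j |: B) k = ht B k + (j < k).
Proof.
move=> notBj; rewrite /ht -!sumb_card (bigD1 j) // [in RHS](bigD1 j) //= !inE eqxx.
rewrite (negbTE notBj) add0n addnC; congr (_ + _).
by apply: eq_bigr => x /negbTE ne_xj; rewrite !inE ne_xj.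
Qed.

Lemma ht_setD1 B i k : i \in B -> ht (B :\ i) k + (i < k) = ht B k.
Proof.
move=> Bi; rewrite /ht -!sumb_card (bigD1 i) // [in RHS](bigD1 i) //= !inE eqxx Bi /=.
rewrite add0n addnC; congr (_ + _).
by apply: eq_bigr => x /negbTE ne_xi; rewrite !inE ne_xi.
Qed.

Lemma ht_swap B i j k : i \in B -> j \notin B ->
  ht (swap B i j) k + (i < k) = ht B k + (j < k).
Proof.
move=> Bi notBj; rewrite /swap ht_setU1; last by rewrite !inE negb_and notBj orbT.
by rewrite addnAC ht_setD1.
Qed.

Lemma card_swap B i j : i \in B -> j \notin B -> #|swap B i j| = #|B|.
Proof.
move=> Bi notBj; rewrite /swap cardsU1 !inE negb_and notBj orbT.
by rewrite [in RHS](cardsD1 i) Bi.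
Qed.

Lemma swap_neq B i j : j \notin B -> swap B i j != B.
Proof. by move=> notBj; apply/eqP => swap_eq; move: notBj; rewrite -swap_eq !inE eqxx. Qed.

Lemma swapK B i j : i \in B -> j \notin B -> swap (swap B i j) j i = B.
Proof.
move=> Bi notBj; apply/setP => x; rewrite !inE.
case: (eqVneq x i) => [->|_]; first by rewrite Bi.
by case: (eqVneq x j) => [->|_]; rewrite ?(negbTE notBj).
Qed.

Lemma crossing_after B0 B1 i :
  #|B0| = #|B1| -> ht B1 i <= ht B0 i -> i \in B0 -> i \notin B1 ->
  exists j, [/\ i < j, j \in B1, j \notin B0 & forall k, i < k <= j -> ht B1 k < ht B0 k].
Proof.
move=> card_B01 le_i B0i notB1i.
have at_n : (i < n) && (ht B0 n <= ht B1 n) by rewrite ltn_ord !ht_full // card_B01 leqnn.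
pose after k := (i < k) && (ht B0 k <= ht B1 k).
have [K /andP[lt_iK le_K] min_K] := ex_minnP (ex_intro after n at_n).
have le_Kn : K <= n := min_K n at_n.
have below k : i < k < K -> ht B1 k < ht B0 k.
  case/andP=> lt_ik; apply: contraTT; rewrite -leqNgt => le_k.
  by rewrite -leqNgt min_K // /after lt_ik.
have := htS B0 i; have := htS B1 i; rewrite B0i (negbTE notB1i) addn0 addn1 => step1 step0.
have lt_i1K : i.+1 < K.
  rewrite ltn_neqAle lt_iK andbT; apply: contraTN le_K => /eqP <-.
  by rewrite step0 step1 -leqNgt.
have K_gt0 : 0 < K := leq_ltn_trans (leq0n i) lt_iK.
have lt_jn : K.-1 < n by rewrite prednK.
pose j := Ordinal lt_jn.
have below_j : ht B1 K.-1 < ht B0 K.-1 by apply: below; lia.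
have := htS B0 j; have := htS B1 j; rewrite /= prednK // => stepj1 stepj0.
have [B1j notB0j] : j \in B1 /\ j \notin B0.
  by move: le_K; rewrite stepj0 stepj1; case: (j \in B0); case: (j \in B1) => /=; lia.
exists j; split=> //= [|k /andP[lt_ik le_kj]]; first lia.
by apply: below; rewrite lt_ik; lia.
Qed.

Lemma crossing_before B0 B1 i : ht B0 i < ht B1 i ->
  exists j, [/\ j < i, j \in B1, j \notin B0 & forall k, j < k <= i -> ht B0 k < ht B1 k].
Proof.
move=> lt_i.
have at_0 : (0 <= i) && (ht B1 0 <= ht B0 0) by rewrite !ht0.
have bounded k : (k <= i) && (ht B1 k <= ht B0 k) -> k <= i by case/andP.
pose before k := (k <= i) && (ht B1 k <= ht B0 k).
have [J /andP[le_Ji le_J] max_J] := ex_maxnP (ex_intro before 0 at_0) bounded.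
have above k : J < k <= i -> ht B0 k < ht B1 k.
  case/andP=> lt_Jk le_ki; apply: contraTT lt_Jk; rewrite -!leqNgt => le_k.
  by rewrite max_J // /before le_ki.
have lt_Ji : J < i.
  by rewrite ltn_neqAle le_Ji andbT; apply: contraTN le_J => /eqP ->; rewrite -ltnNge.
pose j := Ordinal (ltn_trans lt_Ji (ltn_ord i)).
have above_j : ht B0 J.+1 < ht B1 J.+1 by apply: above; rewrite ltnSn.
have := htS B0 j; have := htS B1 j; rewrite /= => stepj1 stepj0.
have [B1j notB0j] : j \in B1 /\ j \notin B0.
  by move: above_j; rewrite stepj0 stepj1; case: (j \in B0); case: (j \in B1) => /=; lia.
by exists j; split.
Qed.

Lemma setD_swap B i j : i \in B -> j \notin B -> B :\: swap B i j = [set i].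
Proof.
move=> Bi notBj; apply/setP => x; rewrite !inE.
case: (eqVneq x i) => [->|_] /=; last by case: (x \in B); rewrite ?orbT ?andbF.
by rewrite Bi orbF andbT; apply: contraNneq notBj => <-.
Qed.

Lemma swap_setD B i j : i \in B -> j \notin B -> swap B i j :\: B = [set j].
Proof.
move=> Bi notBj; apply/setP => x; rewrite !inE.
case: (eqVneq x j) => [->|_] /=; first by rewrite notBj.
by case: (x \in B); rewrite ?andbF.
Qed.

End Swap.

Section Bases.
Variables (n r : nat) (P Q : {set 'I_n}).
Hypothesis card_P : #|P| = r.
Local Notation bases := (lpm_bases r P Q).
Implicit Types (B X L : {set 'I_n}) (i j : 'I_n) (k : nat).

Lemma basesP X :
  reflect (#|X| = r /\ forall k, k <= n -> ht P k <= ht X k <= ht Q k) (X \in bases).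
Proof.
rewrite inE; apply: (iffP andP) => [[/eqP card_X /forallP region_X]|[card_X region_X]].
  by split=> // k le_kn; exact: (region_X (Ordinal (le_kn : k < n.+1))).
by split; [apply/eqP | apply/forallP => k; apply: region_X; rewrite -ltnS].
Qed.

Lemma swap_down_base X i j : X \in bases -> i \in X -> j \notin X -> i < j ->
  (forall k, i < k <= j -> ht P k < ht X k) -> swap X i j \in bases.
Proof.
move=> /basesP[card_X region_X] Xi notXj lt_ij above_P; apply/basesP.
split=> [|k le_kn]; first by rewrite card_swap.
have := region_X k le_kn; have := ht_swap k Xi notXj.
case: (ltnP i k) => [lt_ik|le_ki]; last lia.
case: (leqP k j) => [le_kj|lt_jk]; last lia.
by have := above_P k; rewrite lt_ik le_kj => /(_ isT); lia.
Qed.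

Lemma swap_up_base X i j : X \in bases -> i \in X -> j \notin X -> j < i ->
  (forall k, j < k <= i -> ht X k < ht Q k) -> swap X i j \in bases.
Proof.
move=> /basesP[card_X region_X] Xi notXj lt_ji below_Q; apply/basesP.
split=> [|k le_kn]; first by rewrite card_swap.
have := region_X k le_kn; have := ht_swap k Xi notXj.
case: (ltnP j k) => [lt_jk|le_kj]; last lia.
case: (leqP k i) => [le_ki|lt_ik]; last lia.
by have := below_Q k; rewrite lt_jk le_ki => /(_ isT); lia.
Qed.

Lemma swap_down_above X i j k : swap X i j \in bases -> i \in X -> j \notin X ->
  i < k <= j -> ht P k < ht X k.
Proof.
move=> /basesP[_ region_swap] Xi notXj /andP[lt_ik le_kj].
have le_kn : k <= n := leq_trans le_kj (ltnW (ltn_ord j)).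
have := region_swap k le_kn; have := ht_swap k Xi notXj.
by rewrite lt_ik ltnNge le_kj; lia.
Qed.

Lemma swap_baseE L i j : L \in bases -> i \in L -> j \notin L -> i < j ->
  (swap L i j \in bases) = (j < next_meet P L i).
Proof.
move=> L_base Li notLj lt_ij; have [card_L region_L] := basesP _ L_base.
have card_PL : #|P| = #|L| by rewrite card_L.
apply/idP/idP => [swap_base|lt_j_next].
  rewrite ltnNge; apply/negP => le_next_j.
  have := swap_down_above swap_base Li notLj (k := next_meet P L i).
  rewrite next_meet_gt le_next_j => /(_ isT).
  by rewrite (eqP (next_meet_meet card_PL (ltn_ord i))) ltnn.
apply: swap_down_base => // k /andP[lt_ik le_kj].
have := @next_meet_min _ P L card_PL i k; rewrite lt_ik (leq_ltn_trans le_kj lt_j_next).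
have := region_L k (leq_trans le_kj (ltnW (ltn_ord j))); rewrite /isect ltn_neqAle.
by case/andP=> -> _ /(_ isT) ->.
Qed.

Lemma symmetric_exchange B0 B1 i : B0 \in bases -> B1 \in bases -> i \in B0 -> i \notin B1 ->
  exists j, [/\ j \in B1, j \notin B0, swap B0 i j \in bases & swap B1 j i \in bases].
Proof.
move=> B0_base B1_base B0i notB1i.
have [[card_B0 region_B0] [card_B1 region_B1]] := (basesP _ B0_base, basesP _ B1_base).
have le_n (j : 'I_n) k : k <= j -> k <= n by move/leq_trans; apply; apply: ltnW.
case: (leqP (ht B1 i) (ht B0 i)) => [le_i|lt_i].
  have card_B01 : #|B0| = #|B1| by rewrite card_B0.
  have [j [lt_ij B1j notB0j below]] := crossing_after card_B01 le_i B0i notB1i.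
  exists j; split=> //.
    apply: swap_down_base => // k /andP[lt_ik le_kj]; have := region_B1 k (le_n j k le_kj).
    by have := below k; rewrite lt_ik le_kj => /(_ isT); lia.
  apply: swap_up_base => // k /andP[lt_ik le_kj]; have := region_B0 k (le_n j k le_kj).
  by have := below k; rewrite lt_ik le_kj => /(_ isT); lia.
have [j [lt_ji B1j notB0j above]] := crossing_before lt_i.
exists j; split=> //.
  apply: swap_up_base => // k /andP[lt_jk le_ki]; have := region_B1 k (le_n i k le_ki).
  by have := above k; rewrite lt_jk le_ki => /(_ isT); lia.
apply: swap_down_base => // k /andP[lt_jk le_ki]; have := region_B0 k (le_n i k le_ki).
by have := above k; rewrite lt_jk le_ki => /(_ isT); lia.
Qed.

Definition down_swaps L i :=
  [set j : 'I_n | (i < j) && (j \notin L) && (swap L i j \in bases)].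

Lemma seg_inversions_down_swaps L :
  L \in bases -> seg_inversions P L L = \sum_(i in L) #|down_swaps L i|.
Proof.
move=> L_base; apply: eq_bigr => i Li; apply: eq_card => j; rewrite [LHS]inE [RHS]inE.
case: (boolP (j \in L)) => [_|notLj]; rewrite ?andbF //=.
by case: (ltnP i j) => // lt_ij; rewrite swap_baseE.
Qed.

Local Notation triple := ({set 'I_n} * 'I_n * 'I_n)%type.

(* Each edge is recorded once, from the endpoint whose North step comes first. *)
Definition down_triple (t : triple) :=
  [&& t.1.1 \in bases, t.1.2 \in t.1.1 & t.2 \in down_swaps t.1.1 t.1.2].
Definition down_edge (t : triple) := [set t.1.1; swap t.1.1 t.1.2 t.2].

Lemma down_edge_inj : {in [pred t | down_triple t] &, injective down_edge}.
Proof.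
move=> [[L1 i1] j1] [[L2 i2] j2]; rewrite !inE /down_triple /=.
case/and3P=> _ L1i1; rewrite inE => /andP[/andP[lt1 notL1j1] _].
case/and3P=> _ L2i2; rewrite inE => /andP[/andP[lt2 notL2j2] _].
rewrite /down_edge /= => eq_edges.
have neq1 := swap_neq i1 notL1j1; have neq2 := swap_neq i2 notL2j2.
have : L2 \in [set L1; swap L1 i1 j1] by rewrite eq_edges set21.
case/set2P=> [eqL|eqL2].
  subst L2; have : swap L1 i2 j2 \in [set L1; swap L1 i1 j1] by rewrite eq_edges set22.
  case/set2P=> [/eqP|eq_swap]; first by rewrite (negbTE neq2).
  have := setD_swap L1i1 notL1j1; rewrite -eq_swap setD_swap // => /set1_inj ->.
  by have := swap_setD L1i1 notL1j1; rewrite -eq_swap swap_setD // => /set1_inj ->.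
have : L1 \in [set L2; swap L2 i2 j2] by rewrite -eq_edges set21.
case/set2P=> [eqL|eqL1]; first by move: neq1; rewrite -eqL2 eqL eqxx.
have := setD_swap L1i1 notL1j1; rewrite -eqL2 {1}eqL1 swap_setD // => /set1_inj eq_ji.
have := swap_setD L1i1 notL1j1; rewrite -eqL2 {1}eqL1 setD_swap // => /set1_inj eq_ij.
by move: lt2; rewrite eq_ij eq_ji => /(ltn_trans lt1); rewrite ltnn.
Qed.

Lemma card_down_edges : #|[set down_edge t | t in [pred t | down_triple t]]| =
  \sum_(L in bases) \sum_(i in L) #|down_swaps L i|.
Proof.
rewrite card_in_imset; last exact: down_edge_inj.
have -> : #|[pred t | down_triple t]| = \sum_(t : triple) down_triple t.
  by rewrite sumb_card; apply: eq_card => t; rewrite !inE.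
rewrite [RHS]big_mkcond (eq_bigr (fun L => \sum_i \sum_j (down_triple (L, i, j) : nat))).
  by rewrite pair_big pair_big; apply: eq_big => // -[[L i] j].
move=> L _; rewrite /down_triple /=; case: (L \in bases) => /=; last first.
  by rewrite big1 // => i _; rewrite big1.
rewrite big_mkcond; apply: eq_bigr => i _; case: (i \in L) => /=; last by rewrite big1.
by rewrite sumb_card; apply: eq_card => j; rewrite [RHS]inE.
Qed.

End Bases.

Section Polytope.
Variables (R : realType) (n : nat).
Implicit Types (B X Y : {set 'I_n}) (Bs S : {set {set 'I_n}}) (c : 'rV[R]_n).
Local Open Scope ring_scope.

Lemma dotv_ptvec c B : dotv c (ptvec R B) = \sum_(k in B) c 0 k.
Proof.
rewrite /dotv [RHS]big_mkcond; apply: eq_bigr => k _; rewrite mxE.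
by case: (k \in B); rewrite ?mulr1 ?mulr0.
Qed.

Lemma ptvec_inj : injective (@ptvec n R).
Proof.
move=> B X eq_BX; apply/setP => k; have := congr1 (fun v : 'rV[R]_n => v 0 k) eq_BX.
by rewrite /= !mxE => /eqP; rewrite eqr_nat; case: (k \in B); case: (k \in X).
Qed.

Lemma dotv_swap c B (i j : 'I_n) : i \in B -> j \notin B ->
  dotv c (ptvec R (swap B i j)) + c 0 i = dotv c (ptvec R B) + c 0 j.
Proof.
move=> Bi notBj; rewrite !dotv_ptvec /swap big_setU1 /=; last first.
  by rewrite !inE negb_and notBj orbT.
by rewrite [in RHS](big_setD1 i Bi) /=; lra.
Qed.

Lemma faceP Bs c B : reflect
  (B \in Bs /\ forall B', B' \in Bs -> dotv c (ptvec R B') <= dotv c (ptvec R B))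
  (B \in face_of Bs c).
Proof.
rewrite inE; apply: (iffP andP) => [[Bs_B /forall_inP max_B]|[Bs_B max_B]]; split=> //.
by apply/forall_inP.
Qed.

(* Qualified, since [diffmx] alone is a notation of mxalgebra. *)
Lemma row_diffmx S B (a : 'I_#|S|) :
  row a (Defs.diffmx R S B) = ptvec R (enum_val a) - ptvec R B.
Proof. by apply/rowP => k; rewrite !mxE. Qed.

Lemma rank1_row_span p q (M : 'M[R]_(p, q)) a b :
  \rank M = 1%N -> row a M != 0 -> exists l : R, row b M = l *: row a M.
Proof.
move=> rank_M nz_a; apply/sub_rVP; apply: submx_trans (row_sub b M) _.
have [_ eq_rank] := mxrank_leqif_sup (row_sub a M).
by rewrite -eq_rank rank_rV nz_a rank_M.
Qed.

Lemma rank_diffmx_pair B X : B != X -> \rank (Defs.diffmx R [set B; X] B) = 1%N.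
Proof.
move=> neq_BX; set M := Defs.diffmx R _ B; have S_X : X \in [set B; X] by rewrite set22.
have row_X : row (enum_rank_in S_X X) M = ptvec R X - ptvec R B.
  by rewrite row_diffmx enum_rankK_in.
have nz_X : row (enum_rank_in S_X X) M != 0.
  by rewrite row_X subr_eq0; apply: contra neq_BX => /eqP /ptvec_inj ->.
apply/eqP; rewrite eqn_leq lt0n mxrank_eq0 andbC; apply/andP; split.
  by apply: contra nz_X => /eqP ->; rewrite row0.
apply: leq_trans (rank_leq_row (row (enum_rank_in S_X X) M)).
apply: mxrankS; apply/row_subP => a; rewrite row_diffmx.
by case/set2P: (enum_valP a) => ->; rewrite ?subrr ?sub0mx // -row_X submx_refl.
Qed.

Lemma rank1_diffmx_pair S B X (j : 'I_n) : \rank (Defs.diffmx R S B) = 1%N ->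
  B \in S -> X \in S -> j \in X -> j \notin B -> S = [set B; X].
Proof.
move=> rank_M S_B S_X Xj notBj; set M := Defs.diffmx R S B.
have row_X : row (enum_rank_in S_X X) M = ptvec R X - ptvec R B.
  by rewrite row_diffmx enum_rankK_in.
have nz_X : row (enum_rank_in S_X X) M != 0.
  by rewrite row_X subr_eq0; apply: contraNneq notBj => /ptvec_inj <-.
apply/setP => Y; apply/idP/set2P => [S_Y|[]->//].
have [l] := rank1_row_span (enum_rank_in S_Y Y) rank_M nz_X.
rewrite row_X row_diffmx enum_rankK_in // => eq_l.
have := congr1 (fun v : 'rV[R]_n => v 0 j) eq_l; rewrite /= !mxE Xj (negbTE notBj) /=.
case: (j \in Y) => /= l_val.
  have l1 : l = 1 by lra.
  by right; apply: ptvec_inj; apply: (subIr (ptvec R B)); rewrite eq_l l1 scale1r.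
have l0 : l = 0 by lra.
by left; apply: ptvec_inj; apply: subr0_eq; rewrite eq_l l0 scale0r.
Qed.

End Polytope.

Section Edges.
Variables (R : realType) (n r : nat) (P Q : {set 'I_n}).
Hypothesis card_P : #|P| = r.
Local Notation bases := (lpm_bases r P Q).
Implicit Types (B X Y : {set 'I_n}) (i j : 'I_n).
Local Open Scope ring_scope.

Lemma pair_is_edge B X : B \in bases -> X \in bases -> B != X -> #|B :&: X| = r.-1 ->
  is_edge R bases [set B; X].
Proof.
move=> B_base X_base neq_BX card_BX; split; last by exists B; rewrite ?set21 ?rank_diffmx_pair.
case/basesP: (B_base) => card_B _; case/basesP: (X_base) => card_X _.
(* [c] has value [#|Y :&: B| + #|Y :&: X|] at [Y], maximal exactly at [B] and [X]. *)
pose c : 'rV[R]_n := \row_k ((k \in B) + (k \in X))%:R.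
have dot_c Y : dotv c (ptvec R Y) = (#|Y :&: B| + #|Y :&: X|)%:R.
  rewrite dotv_ptvec; under eq_bigr do rewrite mxE.
  by rewrite -natr_sum big_split /= !sum_mem_card.
have top_B : (#|B :&: B| + #|B :&: X| = r + r.-1)%N by rewrite setIid card_B card_BX.
have top_X : (#|X :&: B| + #|X :&: X| = r + r.-1)%N.
  by rewrite setIid setIC card_X card_BX addnC.
have below_top Y : Y \in bases -> Y != B -> Y != X ->
    (#|Y :&: B| + #|Y :&: X| < r + r.-1)%N.
  case/basesP=> card_Y _ neq_YB neq_YX.
  have := card_setI_lt (etrans card_Y (esym card_B)) neq_YB.
  have := card_setI_lt (etrans card_Y (esym card_X)) neq_YX.
  by rewrite card_Y; lia.
exists c; apply/setP => Y; apply/set2P/faceP => [eq_Y|[Y_base max_Y]].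
  have [Y_base top_Y] : Y \in bases /\ (#|Y :&: B| + #|Y :&: X| = r + r.-1)%N.
    by case: eq_Y => ->.
  split=> // Y' Y'_base; rewrite !dot_c ler_nat top_Y.
  case: (eqVneq Y' B) => [->|neq_B]; first by rewrite top_B.
  case: (eqVneq Y' X) => [->|neq_X]; first by rewrite top_X.
  exact: ltnW (below_top _ Y'_base neq_B neq_X).
case: (eqVneq Y B) => [|neq_B]; first by left.
case: (eqVneq Y X) => [|neq_X]; first by right.
by have := max_Y B B_base; rewrite !dot_c ler_nat top_B leqNgt below_top.
Qed.

Lemma down_edge_is_edge t : down_triple r P Q t -> is_edge R bases (down_edge t).
Proof.
case: t => [[L i] j] /and3P[/= L_base Li]; rewrite inE => /andP[/andP[_ notLj] swap_base].
apply: pair_is_edge; rewrite // 1?eq_sym ?swap_neq //.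
have -> : L :&: swap L i j = L :\ i.
  apply/setP => x; rewrite !inE; case: (eqVneq x j) => [->|_] /=.
    by rewrite (negbTE notLj) andbF.
  by case: (x \in L); rewrite /= ?andbT ?andbF.
by case/basesP: L_base => card_L _; rewrite -card_L (cardsD1 i L) Li.
Qed.

Lemma is_edge_down_edge S :
  is_edge R bases S -> exists2 t, down_triple r P Q t & S = down_edge t.
Proof.
case=> [[c face_S] [B0 S_B0 rank_S]].
have [B1 S_B1 neq_B10] : exists2 B1, B1 \in S & B1 != B0.
  apply/exists_inP; apply: contraTT (introT eqP rank_S) => /exists_inPn all_B0.
  suff -> : Defs.diffmx R S B0 = 0 by rewrite mxrank0.
  apply/matrixP => a k; rewrite !mxE.
  by have /negPn /eqP -> := all_B0 _ (enum_valP a); rewrite subrr.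
have /faceP[B0_base max_B0] : B0 \in face_of bases c by rewrite -face_S.
have /faceP[B1_base max_B1] : B1 \in face_of bases c by rewrite -face_S.
have [card_B0 _] := basesP _ _ _ _ B0_base; have [card_B1 _] := basesP _ _ _ _ B1_base.
have [i B0i notB1i] : exists2 i, i \in B0 & i \notin B1.
  apply/subsetPn; apply: contra neq_B10 => sub_01.
  by rewrite eq_sym eqEcard sub_01 card_B0 card_B1 leqnn.
have [j [B1j notB0j swap0_base swap1_base]] :=
  symmetric_exchange card_P B0_base B1_base B0i notB1i.
(* The two exchanged bases have the same total weight as [B0] and [B1]. *)
have S_swap0 : swap B0 i j \in S.
  rewrite face_S; apply/faceP; split=> // Y Y_base.
  have := dotv_swap c B0i notB0j; have := dotv_swap c B1j notB1i.
  have := max_B1 _ swap1_base; have := max_B0 _ Y_base; lra.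
have -> := rank1_diffmx_pair rank_S S_B0 S_swap0 (setU11 j _) notB0j.
have neq_ij : i != j by apply: contraNneq notB0j => <-.
case: (ltnP i j) => [lt_ij|le_ji].
  by exists (B0, i, j); rewrite // /down_triple /= B0_base B0i inE lt_ij notB0j.
have lt_ji : (j < i)%N by rewrite ltn_neqAle le_ji andbT eq_sym.
exists (swap B0 i j, j, i); last by rewrite /down_edge /= swapK // setUC.
rewrite /down_triple /= swap0_base in_setU1 eqxx /= inE lt_ji swapK // B0_base !inE.
by rewrite (negbTE neq_ij) eqxx.
Qed.

End Edges.

Unset Implicit Arguments.

Theorem corollary5p9 (R : realType) (m r : nat) (P Q : {set 'I_(m + r)}) :
  #|P| = r -> #|Q| = r ->
  (* P never goes above Q *)
  (forall k : nat, k <= m + r -> ht P k <= ht Q k) ->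
  (* [P,Q] connected: P and Q meet only at (0,0) and (m,r) *)
  (forall k : nat, 0 < k < m + r -> ht P k < ht Q k) ->
  exists E : {set {set {set 'I_(m + r)}}},
    (forall S, S \in E <-> is_edge R (lpm_bases r P Q) S) /\
    #|E| = \sum_(L : {set 'I_(m + r)} | (#|L| == r) && in_region P Q L)
              area m (Lprime P L) L.
Proof.
move=> card_P _ _ _.
exists [set down_edge t | t in [pred t | down_triple r P Q t]]; split.
  move=> S; split=> [/imsetP[t t_down ->]|/(is_edge_down_edge card_P)[t t_down ->]].
    exact: down_edge_is_edge.
  exact: imset_f.
rewrite card_down_edges; apply: eq_big => [L|L L_base]; first by rewrite inE.
have [card_L _] := basesP _ _ _ _ L_base.
by rewrite -seg_inversions_down_swaps // area_Lprime // ?card_P ?card_L // addnC.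
Qed.
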